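(* Let $G(1)=(V(1),E(1))$ be a neutral graph, let $G(2)=(V(2),E(2))$ be a $k$-regular graph, and let $\alpha\geq 2$ and $\beta\geq 1$ be integers with $2(\alpha-1)|E(1)|=\beta|V(2)|$. Let $G^{\oplus}$ be a simple graph obtained from the disjoint union of $G(1)$ and $G(2)$ by adding edges between $V(1)$ and $V(2)$ so that each vertex $u\in V(1)$ is incident to exactly $(\alpha-1)d_u$ added edges (with $d_u$ the degree of $u$ in $G(1)$) and each vertex of $V(2)$ is incident to exactly $\beta$ added edges. If $$\frac{|E(2)|}{|E(1)|}=(\alpha-1)^{2}=\Big(\frac{k}{\beta}\Big)^{2}=\Big(\frac{|V(2)|}{|V(1)|}\Big)^{2},$$ then $G^{\oplus}$ is neutral.
   Context: All graphs are finite, simple and connected. (In the paper's description, $\beta$ ''incomplete edges'' emanate from each vertex of $G(2)$, and for each edge of $G(1)$, $\alpha-1$ incomplete edges emanate from each of its endvertices; incomplete edges of $G(1)$ are merged one-to-one with incomplete edges of $G(2)$ until none is left.) For a graph $G=(V,E)$ with $m=|E|\geq1$ and degrees $d_u$, the assortativity coefficient is $$r(G)=\frac{m^{-1}\sum_{e_{uv}\in E} d_{u}d_{v}-\Big[m^{-1}\sum_{e_{uv}\in E} \tfrac{1}{2}(d_{u}+d_{v})\Big]^{2}}{m^{-1}\sum_{e_{uv}\in E} \tfrac{1}{2}(d^{2}_{u}+d^{2}_{v})-\Big[m^{-1}\sum_{e_{uv}\in E} \tfrac{1}{2}(d_{u}+d_{v})\Big]^{2}},$$ sums over edges counting each edge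 once, defined whenever the denominator is nonzero; $G$ is neutral if $r(G)$ is defined and equals $0$. *)

From mathcomp Require Import all_boot all_order all_algebra.
Set Implicit Arguments. Unset Strict Implicit. Unset Printing Implicit Defensive.
Import Order.TTheory GRing.Theory Num.Theory.

Definition simple_graph (T : finType) (e : rel T) : Prop :=
  symmetric e /\ irreflexive e.

Definition graph_connected (T : finType) (e : rel T) : Prop :=
  forall x y : T, connect e x y.

Definition deg (T : finType) (e : rel T) (u : T) : nat := #|[set v | e u v]|.

Definition regular (T : finType) (e : rel T) (k : nat) : Prop :=
  forall u : T, deg e u = k.

Definition edges (T : finType) (e : rel T) : {set {set T}} :=
  [set [set x.1; x.2] | x in [set x : T * T | e x.1 x.2]].

Local Open Scope ring_scope.

Definition assort_A (T : finType) (e : rel T) : rat :=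
  (#|edges e|%:R)^-1 * \sum_(S in edges e) \prod_(x in S) ((deg e x)%:R : rat).
Definition assort_B (T : finType) (e : rel T) : rat :=
  (#|edges e|%:R)^-1 * \sum_(S in edges e) (\sum_(x in S) ((deg e x)%:R : rat)) / 2.
Definition assort_C (T : finType) (e : rel T) : rat :=
  (#|edges e|%:R)^-1 * \sum_(S in edges e) (\sum_(x in S) ((deg e x)%:R : rat) ^+ 2) / 2.

Definition assort_num (T : finType) (e : rel T) : rat := assort_A e - assort_B e ^+ 2.
Definition assort_den (T : finType) (e : rel T) : rat := assort_C e - assort_B e ^+ 2.

Definition assortativity (T : finType) (e : rel T) : rat := assort_num e / assort_den e.

(* neutral: r(G) defined (m >= 1, nonzero denominator) and equal to 0 *)
Definition neutral (T : finType) (e : rel T) : Prop :=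
  (0 < #|edges e|)%N /\ assort_den e != 0 /\ assortativity e = 0.

Definition join_graph (T1 T2 : finType) (e1 : rel T1) (e2 : rel T2)
  (c : T1 -> T2 -> bool) : rel (T1 + T2) :=
  fun x y => match x, y with
  | inl a, inl b => e1 a b
  | inr a, inr b => e2 a b
  | inl a, inr b => c a b
  | inr a, inl b => c b a
  end.

(* Write S_j for the j-th moment of the degree sequence and P for the sum of
   d_x d_y over ordered pairs of adjacent vertices.  Since S_1 = 2m, the
   assortativity of a graph with edges is (S_1 P - S_2^2) / (S_1 S_3 - S_2^2),
   so neutrality means S_1 P = S_2^2 and S_1 S_3 <> S_2^2.  In the join every
   vertex of G(1) has its degree multiplied by s = alpha and every vertex of
   G(2) has degree s beta (k = (alpha - 1) beta).  Double counting the cross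
   edges gives beta |V(2)| = (alpha - 1) S_1, and then
     S_1' P' - S_2'^2 = s^4 (S_1 P - S_2^2),
     S_1' S_3' - S_2'^2
       = s^4 ((S_1 S_3 - S_2^2) + (alpha - 1) S_1 sum_x d_x (d_x - beta)^2),
   which is positive because S_2^2 <= S_1 S_3 by Cauchy-Schwarz. *)

From mathcomp Require Import all_boot all_order all_algebra.
From mathcomp Require Import ring.
Import Order.TTheory GRing.Theory Num.Theory.
Set Implicit Arguments. Unset Strict Implicit. Unset Printing Implicit Defensive.
Local Open Scope ring_scope.

Definition degr (T : finType) (e : rel T) (x : T) : rat := (deg e x)%:R.

Definition deg_moment (T : finType) (e : rel T) (j : nat) : rat :=
  \sum_x degr e x ^+ j.

Definition deg_pair_sum (T : finType) (e : rel T) : rat :=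
  \sum_x \sum_(y | e x y) degr e x * degr e y.

Section DegreeSums.
Variables (T : finType) (e : rel T).

Lemma sumr_const_cond (P : pred T) (x : rat) :
  \sum_(y | P y) x = #|[set y | P y]|%:R * x.
Proof.
by rewrite -sum1dep_card natr_sum mulr_suml; apply: eq_bigr => y _; rewrite mul1r.
Qed.

Lemma sumr_constT (x : rat) : \sum_(y : T) x = #|T|%:R * x.
Proof. by rewrite sumr_const mulr_natl. Qed.

Lemma degrE x : degr e x = \sum_(y | e x y) 1.
Proof. by rewrite sumr_const_cond mulr1. Qed.

Lemma deg_moment_dev_ge0 (w : rat) :
  0 <= deg_moment e 3 - 2 * w * deg_moment e 2 + w ^+ 2 * deg_moment e 1.
Proof.
have -> : deg_moment e 3 - 2 * w * deg_moment e 2 + w ^+ 2 * deg_moment e 1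
          = \sum_x degr e x * (degr e x - w) ^+ 2.
  by rewrite !mulr_sumr -sumrB -big_split; apply: eq_bigr => x _ /=; ring.
by apply: sumr_ge0 => x _; rewrite mulr_ge0 ?ler0n ?sqr_ge0.
Qed.

Lemma deg_moment_sqr_le : deg_moment e 2 ^+ 2 <= deg_moment e 1 * deg_moment e 3.
Proof.
have [S1_gt0 | S1_le0] := ltrP 0 (deg_moment e 1).
  rewrite -subr_ge0.
  have -> : deg_moment e 1 * deg_moment e 3 - deg_moment e 2 ^+ 2 = deg_moment e 1 *
      (deg_moment e 3 - 2 * (deg_moment e 2 / deg_moment e 1) * deg_moment e 2
       + (deg_moment e 2 / deg_moment e 1) ^+ 2 * deg_moment e 1).
    by field; rewrite gt_eqF.
  by rewrite mulr_ge0 ?deg_moment_dev_ge0 // ltW.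
have S1_eq0 : deg_moment e 1 = 0.
  by apply/eqP; rewrite eq_le S1_le0 sumr_ge0 // => x _; rewrite expr1 ler0n.
have deg0 x : degr e x = 0.
  by rewrite -[degr e x]expr1 (psumr_eq0P _ S1_eq0) // => y _; rewrite expr1 ler0n.
by rewrite S1_eq0 mul0r /deg_moment big1 ?expr0n // => x _; rewrite deg0 expr0n.
Qed.
End DegreeSums.

Section SimpleGraph.
Variables (T : finType) (e : rel T).
Hypotheses (e_sym : symmetric e) (e_irr : irreflexive e).

Lemma sum_edgesMn2 (V : nmodType) (F : {set T} -> V) :
  (\sum_(S in edges e) F S) *+ 2 = \sum_x \sum_(y | e x y) F [set x; y].
Proof.
rewrite pair_big_dep /= (partition_big (fun p => [set p.1; p.2]) (mem (edges e))) /=;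
  last by move=> p ep; apply/imsetP; exists p; rewrite ?inE.
rewrite -[LHS]sumrMnl.
apply: eq_bigr => S /imsetP[[x y]]; rewrite inE /= => exy ->.
have nxy : x != y by apply: contraTneq exy => ->; rewrite e_irr.
rewrite (eq_bigr (fun=> F [set x; y])); last by move=> p /andP[_ /eqP->].
rewrite (eq_bigl (mem [set (x, y); (y, x)])) ?sumr_const ?cards2.
  by rewrite xpair_eqE negb_and nxy.
case=> u v /=; rewrite !inE !xpair_eqE; apply/idP/idP => [/andP[euv /eqP xy_uv]|].
  have nuv : u != v by apply: contraTneq euv => ->; rewrite e_irr.
  move: nuv; have : v \in [set x; y] by rewrite -xy_uv setU1r ?set11.
  have : u \in [set x; y] by rewrite -xy_uv setU11.
  by move=> /set2P[]-> /set2P[]->; rewrite ?eqxx ?orbT.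
by case/orP=> /andP[/eqP-> /eqP->]; rewrite ?(e_sym y x) exy ?eqxx // setUC eqxx.
Qed.

Lemma sum_edges_sum (g : T -> rat) :
  \sum_(S in edges e) \sum_(x in S) g x = \sum_x degr e x * g x.
Proof.
apply: (mulIf (_ : 2 != 0)) => //; rewrite !mulr_natr sum_edgesMn2.
transitivity (\sum_x (\sum_(y | e x y) g x + \sum_(y | e x y) g y)).
  apply: eq_bigr => x _; rewrite -big_split; apply: eq_bigr => y exy.
  have nxy : x != y by apply: contraTneq exy => ->; rewrite e_irr.
  by rewrite big_setU1 ?big_set1 ?inE.
rewrite big_split /= [X in _ + X](exchange_big_dep predT) //=.
rewrite [X in _ + X](eq_bigr (fun x => \sum_(y | e x y) g x)) => [|x _]; last first.
  by apply: eq_bigl => y; rewrite e_sym.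
rewrite -mulr2n; congr (_ *+ 2); apply: eq_bigr => x _.
by rewrite degrE mulr_suml; apply: eq_bigr => y _; rewrite mul1r.
Qed.

Lemma edges_handshake : #|edges e|%:R *+ 2 = deg_moment e 1.
Proof.
rewrite -sum1_card natr_sum sum_edgesMn2; apply: eq_bigr => x _.
by rewrite expr1 degrE.
Qed.

Lemma sum_edges_prod :
  (\sum_(S in edges e) \prod_(x in S) degr e x) *+ 2 = deg_pair_sum e.
Proof.
rewrite sum_edgesMn2; apply: eq_bigr => x _; apply: eq_bigr => y exy.
have nxy : x != y by apply: contraTneq exy => ->; rewrite e_irr.
by rewrite big_setU1 ?big_set1 ?inE.
Qed.

Lemma invr_card_edges (X : rat) :
  #|edges e|%:R^-1 * X = X *+ 2 / deg_moment e 1.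
Proof.
rewrite -edges_handshake.
have [->|m_neq0] := eqVneq (#|edges e|%:R : rat) 0.
  by rewrite mul0rn !invr0 mulr0 mul0r.
by field; rewrite m_neq0.
Qed.

Lemma assort_AE : assort_A e = deg_pair_sum e / deg_moment e 1.
Proof. by rewrite /assort_A invr_card_edges sum_edges_prod. Qed.

Lemma assort_BE : assort_B e = deg_moment e 2 / deg_moment e 1.
Proof.
rewrite /assort_B invr_card_edges -mulr_suml sum_edges_sum mulr2n -splitr.
by congr (_ / _); apply: eq_bigr => x _; rewrite expr2.
Qed.

Lemma assort_CE : assort_C e = deg_moment e 3 / deg_moment e 1.
Proof.
rewrite /assort_C invr_card_edges -mulr_suml sum_edges_sum mulr2n -splitr.
by congr (_ / _); apply: eq_bigr => x _; rewrite exprS.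
Qed.

Lemma neutral_moments :
  neutral e <->
  [/\ 0 < deg_moment e 1,
      deg_moment e 1 * deg_moment e 3 - deg_moment e 2 ^+ 2 != 0 &
      deg_moment e 1 * deg_pair_sum e - deg_moment e 2 ^+ 2 = 0].
Proof.
rewrite /neutral /assortativity /assort_num /assort_den assort_AE assort_BE assort_CE.
rewrite -[(0 < _)%N](ltr0n rat) -(pmulrn_lgt0 _ (isT : 0 < 2)%N) edges_handshake.
set S1 := deg_moment e 1; set S2 := deg_moment e 2; set S3 := deg_moment e 3.
set P := deg_pair_sum e.
have [S1_gt0 | S1_le0] := ltrP 0 S1; last first.
  by split=> [[]|[]].
have S1_neq0 : S1 != 0 by rewrite gt_eqF.
have S1sq_neq0 : S1 ^+ 2 != 0 by rewrite expf_neq0.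
have -> : P / S1 - (S2 / S1) ^+ 2 = (S1 * P - S2 ^+ 2) / S1 ^+ 2 by field.
have -> : S3 / S1 - (S2 / S1) ^+ 2 = (S1 * S3 - S2 ^+ 2) / S1 ^+ 2 by field.
have ratioE (N D : rat) : D != 0 -> N / S1 ^+ 2 / (D / S1 ^+ 2) = N / D.
  by move=> D_neq0; field; rewrite D_neq0 S1_neq0.
have divf_eq0 (N D : rat) : D != 0 -> (N / D == 0) = (N == 0).
  by move=> D_neq0; rewrite mulf_eq0 invr_eq0 (negbTE D_neq0) orbF.
split=> [[_ [DS_neq0 /eqP]] | [_ D_neq0 N0]].
  have D_neq0 : S1 * S3 - S2 ^+ 2 != 0 by rewrite -(divf_eq0 _ _ S1sq_neq0).
  by rewrite ratioE // divf_eq0 // => /eqP N0; split.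
split=> //; split; first by rewrite divf_eq0.
by rewrite ratioE // N0 mul0r.
Qed.

End SimpleGraph.

Section JoinGraph.
Variables (T1 T2 : finType) (e1 : rel T1) (e2 : rel T2) (c : T1 -> T2 -> bool).
Local Notation J := (join_graph e1 e2 c).

Lemma join_graph_simple : simple_graph e1 -> simple_graph e2 -> simple_graph J.
Proof.
move=> [sym1 irr1] [sym2 irr2]; split; last by case=> x /=.
by case=> x [] y /=; [exact: sym1 | | | exact: sym2].
Qed.

Variables (a b : nat).
Hypothesis cross_deg1 : forall u, #|[set v | c u v]| = (a * deg e1 u)%N.
Hypothesis cross_deg2 : forall v, #|[set u | c u v]| = b.
Hypothesis e2_regular : regular e2 (a * b).

Local Notation s := (a%:R + 1 : rat).

Lemma degr_join_inl u : degr J (inl u) = s * degr e1 u.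
Proof.
rewrite [LHS]degrE big_sumType /= -degrE sumr_const_cond cross_deg1 natrM.
by rewrite mulr1 /degr; ring.
Qed.

Lemma degr_join_inr v : degr J (inr v) = s * b%:R.
Proof.
rewrite degrE big_sumType /= -degrE sumr_const_cond cross_deg2 /degr e2_regular.
by rewrite natrM mulr1; ring.
Qed.

Lemma sum_cross_edges (f : T1 -> rat) :
  \sum_v \sum_(u | c u v) f u = a%:R * \sum_u degr e1 u * f u.
Proof.
rewrite (exchange_big_dep predT) //= mulr_sumr; apply: eq_bigr => u _.
by rewrite sumr_const_cond cross_deg1 natrM mulrA.
Qed.

Lemma cross_edges_count : b%:R * #|T2|%:R = a%:R * deg_moment e1 1.
Proof.
have := sum_cross_edges (fun=> 1); rewrite /deg_moment.
under eq_bigr do rewrite sumr_const_cond cross_deg2 mulr1.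
rewrite sumr_constT mulrC => ->; congr (_ * _).
by apply: eq_bigr => u _; rewrite expr1 mulr1.
Qed.

Lemma deg_moment_join j :
  deg_moment J j.+1
  = s ^+ j.+1 * (deg_moment e1 j.+1 + a%:R * b%:R ^+ j * deg_moment e1 1).
Proof.
rewrite /deg_moment big_sumType /=.
under eq_bigr do rewrite degr_join_inl exprMn.
under [X in _ + X]eq_bigr do rewrite degr_join_inr.
rewrite -mulr_sumr sumr_constT -/(deg_moment e1 j.+1) mulrAC -cross_edges_count.
rewrite exprMn !exprS.
by set sj := (_ + 1) ^+ j; set bj := _ ^+ j; ring.
Qed.

Lemma deg_pair_sum_join :
  deg_pair_sum J = s ^+ 2 * (deg_pair_sum e1 + 2 * a%:R * b%:R * deg_moment e1 2
                             + (a%:R * b%:R) ^+ 2 * deg_moment e1 1).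
Proof.
have inl_sum u : \sum_(y | J (inl u) y) degr J (inl u) * degr J y
    = s ^+ 2 * \sum_(w | e1 u w) degr e1 u * degr e1 w
      + s ^+ 2 * a%:R * b%:R * degr e1 u ^+ 2.
  rewrite big_sumType /=.
  under [X in _ + X]eq_bigr do rewrite degr_join_inr.
  rewrite sumr_const_cond cross_deg1 natrM mulr_sumr; congr (_ + _).
    by apply: eq_bigr => w _; rewrite !degr_join_inl; ring.
  by rewrite degr_join_inl /degr; ring.
have inr_sum v : \sum_(y | J (inr v) y) degr J (inr v) * degr J y
    = s ^+ 2 * b%:R * \sum_(u | c u v) degr e1 u + s ^+ 2 * a%:R * b%:R ^+ 3.
  rewrite big_sumType /=.
  under [X in _ + X]eq_bigr do rewrite !degr_join_inr.
  rewrite sumr_const_cond -/(deg e2 v) e2_regular natrM mulr_sumr; congr (_ + _).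
    by apply: eq_bigr => u _; rewrite degr_join_inl degr_join_inr; ring.
  by ring.
rewrite /deg_pair_sum big_sumType /= (eq_bigr _ (fun u _ => inl_sum u)).
rewrite (eq_bigr _ (fun v _ => inr_sum v)) !big_split /= -!mulr_sumr sum_cross_edges.
rewrite sumr_constT -/(deg_pair_sum e1) -/(deg_moment e1 2).
by rewrite [#|T2|%:R * _]mulrC cross_edges_count; ring.
Qed.

Lemma join_graph_neutral : simple_graph e1 -> simple_graph e2 -> neutral e1 -> neutral J.
Proof.
move=> G1 G2; have [symJ irrJ] := join_graph_simple G1 G2; case: G1 => sym1 irr1.
move=> /(neutral_moments sym1 irr1) [S1_gt0 D1_neq0 N1_eq0].
apply/(neutral_moments symJ irrJ); rewrite !deg_moment_join deg_pair_sum_join.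
move: S1_gt0 D1_neq0 N1_eq0 (deg_moment_sqr_le e1) (deg_moment_dev_ge0 e1 b%:R).
set S1 := deg_moment e1 1; set S2 := deg_moment e1 2; set S3 := deg_moment e1 3.
set P := deg_pair_sum e1; set x := a%:R; set y := b%:R.
move=> S1_gt0 D1_neq0 N1_eq0 CS dev_ge0.
have x_ge0 : 0 <= x by rewrite ler0n.
have s_gt0 : 0 < x + 1 by rewrite ltr_wpDl.
split.
- by rewrite expr1 expr0 mulr1 mulr_gt0 // ltr_wpDr // mulr_ge0 // ltW.
- have -> : (x + 1) ^+ 1 * (S1 + x * y ^+ 0 * S1) * ((x + 1) ^+ 3 * (S3 + x * y ^+ 2 * S1))
            - ((x + 1) ^+ 2 * (S2 + x * y ^+ 1 * S1)) ^+ 2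
          = (x + 1) ^+ 4 * ((S1 * S3 - S2 ^+ 2)
                            + x * S1 * (S3 - 2 * y * S2 + y ^+ 2 * S1)) by ring.
  have D1_gt0 : 0 < S1 * S3 - S2 ^+ 2 by rewrite lt_def D1_neq0 subr_ge0 CS.
  apply: lt0r_neq0; rewrite mulr_gt0 ?exprn_gt0 //.
  by rewrite ltr_wpDr // !mulr_ge0 // ltW.
- have -> : (x + 1) ^+ 1 * (S1 + x * y ^+ 0 * S1)
            * ((x + 1) ^+ 2 * (P + 2 * x * y * S2 + (x * y) ^+ 2 * S1))
            - ((x + 1) ^+ 2 * (S2 + x * y ^+ 1 * S1)) ^+ 2
          = (x + 1) ^+ 4 * (S1 * P - S2 ^+ 2) by ring.
  by rewrite N1_eq0 mulr0.
Qed.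
End JoinGraph.

Theorem lemma7 (T1 T2 : finType) (e1 : rel T1) (e2 : rel T2) (k alpha beta : nat)
  (c : T1 -> T2 -> bool) :
  simple_graph e1 -> graph_connected e1 ->
  simple_graph e2 -> graph_connected e2 ->
  neutral e1 -> regular e2 k ->
  (2 <= alpha)%N -> (1 <= beta)%N ->
  (2 * (alpha - 1) * #|edges e1| = beta * #|T2|)%N ->
  (forall u : T1, #|[set v | c u v]| = ((alpha - 1) * deg e1 u)%N) ->
  (forall v : T2, #|[set u | c u v]| = beta) ->
  (#|edges e2|%:R / #|edges e1|%:R : rat) = ((alpha - 1)%:R) ^+ 2 ->
  ((alpha - 1)%:R : rat) ^+ 2 = (k%:R / beta%:R) ^+ 2 ->
  (k%:R / beta%:R : rat) ^+ 2 = (#|T2|%:R / #|T1|%:R) ^+ 2 ->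
  neutral (join_graph e1 e2 c).
Proof.
move=> G1 _ G2 _ neutral1 reg2 _ beta_gt0 _ cross1 cross2 _ a_sqr _.
have k_eq : k = ((alpha - 1) * beta)%N.
  move/eqP: a_sqr; rewrite eqrXn2 ?ler0n ?divr_ge0 // => /eqP a_eq.
  by apply/eqP; rewrite -(eqr_nat rat) natrM a_eq divfK // pnatr_eq0 -lt0n.
rewrite k_eq in reg2.
exact: join_graph_neutral cross1 cross2 reg2 G1 G2 neutral1.
Qed.
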